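(* For every cardinal $\lambda\geqslant 2$ there is no Hausdorff $d$-feebly compact topological semigroup which contains the $\lambda$-polycyclic monoid $P_\lambda$ as a dense subsemigroup.
   Context: For a non-zero cardinal $\lambda$, the polycyclic monoid $P_\lambda$ is the monoid with zero given by the presentation $\langle \{p_i\}_{i\in\lambda},\{p_i^{-1}\}_{i\in\lambda}\mid p_ip_i^{-1}=1,\ p_ip_j^{-1}=0 \text{ for } i\neq j\rangle$. A topological semigroup is a topological space with a jointly continuous associative operation. A space is $d$-feebly compact if every discrete family of its open subsets is finite. *)

From HB Require Import structures.
From mathcomp Require Import all_boot all_order.
From mathcomp Require Import all_classical all_reals all_analysis.
Set Implicit Arguments. Unset Strict Implicit. Unset Printing Implicit Defensive.
Local Open Scope classical_set_scope.

(* The polycyclic monoid P_I over an alphabet (index set) I, in its standard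
   normal-form model: zero is [None]; the nonzero element [Some (u, v)]
   stands for p_u^{-1} p_v.  Identity is Some ([::], [::]),
   p_i = Some ([::], [:: i]), p_i^{-1} = Some ([:: i], [::]). *)
Definition polycyclic (I : eqType) := option (seq I * seq I).

Definition polymul (I : eqType) (x y : polycyclic I) : polycyclic I :=
  match x, y with
  | Some (u, v), Some (w, z) =>
      if prefix v w then Some (u ++ drop (size v) w, z)
      else if prefix w v then Some (u, z ++ drop (size w) v)
      else None
  | _, _ => None
  end.

Definition discrete_family (S : topologicalType) (F : set (set S)) : Prop :=
  forall x : S, exists2 N : set S, nbhs x N &
    forall U V, F U -> F V -> N `&` U !=set0 -> N `&` V !=set0 -> U = V.

Definition d_feebly_compact (S : topologicalType) : Prop :=
  forall F : set (set S), (forall U, F U -> open U) -> discrete_family F ->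
    finite_set F.

Definition contains_dense_polycyclic (I : eqType) (S : topologicalType)
  (mul : S -> S -> S) : Prop :=
  exists h : polycyclic I -> S,
    [/\ injective h,
        (forall x y, h (polymul x y) = mul (h x) (h y)) &
        dense (range h)].

(* Let h embed P_I densely in S.  By density and continuity h 0 is a zero of S,
   and h x is an isolated point as soon as some open set meets h(P_I) only in
   h x; this holds for 1, for p_w, p_w^-1 and for the idempotents
   e_w = p_w^-1 p_w.  Put w_n = i^n j.  By d-feeble compactness every
   subsequence of an injective sequence of isolated points has a cluster
   point.  Every cluster point of the pairwise orthogonal idempotents e_(w_n)
   is 0, so e_(w_n) --> 0; then p_(w_n) = p_(w_n) e_(w_n) --> 0 and
   p_(w_n)^-1 = e_(w_n) p_(w_n)^-1 --> 0, and by continuity the constant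
   sequence 1 = p_(w_n) p_(w_n)^-1 converges to 0 * 0 = 0, which is absurd
   in a Hausdorff space. *)

From HB Require Import structures.
From mathcomp Require Import all_boot all_order.
From mathcomp Require Import all_classical all_reals all_analysis.

Set Implicit Arguments. Unset Strict Implicit. Unset Printing Implicit Defensive.

Section polycyclic_monoid.
Variable I : eqType.
Implicit Types (u v w : seq I) (x : polycyclic I).

Definition pc_one : polycyclic I := Some ([::], [::]).
Definition pc_gen w : polycyclic I := Some ([::], w).
Definition pc_genV w : polycyclic I := Some (w, [::]).
Definition pc_idem w : polycyclic I := Some (w, w).

Lemma prefix_size_le_eq u v : prefix u v -> size v <= size u -> u = v.
Proof. by rewrite prefixE => /eqP uv vu; rewrite -uv take_oversize. Qed.

Lemma prefix_same_size u v : size u = size v -> prefix u v = (u == v).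
Proof.
move=> size_uv; apply/idP/eqP => [uv|->]; last exact: prefix_refl.
by apply: prefix_size_le_eq; rewrite ?size_uv.
Qed.

Lemma prefix_rcons_proper u v k k' :
  prefix v (rcons u k) -> v != rcons u k -> prefix v (rcons u k').
Proof.
move=> vu /negP neq_vu; have size_v : size v <= size u.
  rewrite leqNgt; apply: contra_notN neq_vu => ?.
  by apply/eqP/prefix_size_le_eq; rewrite ?size_rcons.
by move: vu; rewrite !prefixE -!cats1 !takel_cat.
Qed.

Lemma polymul1x x : polymul pc_one x = x.
Proof. by case: x => [[u v]|] //=; rewrite prefix0s drop0. Qed.

Lemma polymulx1 x : polymul x pc_one = x.
Proof. by case: x => [[u [|k v]]|] //=; rewrite ?cats0 ?drop0. Qed.

Lemma polymulx0 x : polymul x None = None.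
Proof. by case: x => [[]|]. Qed.

Lemma polymul_incomparable u v u' v' : ~~ prefix v u' -> ~~ prefix u' v ->
  polymul (Some (u, v)) (Some (u', v')) = None.
Proof. by move=> /negbTE /= -> /negbTE ->. Qed.

Lemma polymul_idem_same_size v w : size v = size w -> v != w ->
  polymul (pc_idem v) (pc_idem w) = None.
Proof.
move=> size_vw neq_vw; rewrite polymul_incomparable // prefix_same_size //.
by rewrite eq_sym.
Qed.

Lemma polymul_idem_prefix u v :
  prefix u v -> polymul (pc_idem u) (pc_idem v) = pc_idem v.
Proof. by move=> uv; rewrite /= uv; case/prefixP: uv => r ->; rewrite drop_size_cat. Qed.

Lemma polymul_gen_genV w : polymul (pc_gen w) (pc_genV w) = pc_one.
Proof. by rewrite /= prefix_refl drop_size. Qed.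

Lemma polymul_gen_idem w : polymul (pc_gen w) (pc_idem w) = pc_gen w.
Proof. by rewrite /= prefix_refl drop_size. Qed.

Lemma polymul_idem_genV w : polymul (pc_idem w) (pc_genV w) = pc_genV w.
Proof. by rewrite /= prefix_refl drop_size cats0. Qed.

Lemma size_drop_nil w n : drop n w = [::] -> size w <= n.
Proof. by move=> h; rewrite -subn_eq0 -size_drop h. Qed.

Lemma polymul_genV_eq1 x w : polymul x (pc_genV w) = pc_one -> x = pc_gen w.
Proof.
case: x => [[u v]|] //=; case: ifP => [vw [] | _].
  by case: u => [|//] /= /size_drop_nil /(prefix_size_le_eq vw) ->.
case: ifP => [wv [-> /= /size_drop_nil]|//].
by move=> /(prefix_size_le_eq wv) ->.
Qed.

Lemma polymul_gen_eq1 x w : polymul (pc_gen w) x = pc_one -> x = pc_genV w.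
Proof.
case: x => [[u v]|] //=; case: ifP => [wu [/size_drop_nil + ->]|_].
  by move=> /(prefix_size_le_eq wu) ->.
case: ifP => [uw []|//].
by case: v => [|//] /= /size_drop_nil /(prefix_size_le_eq uw) ->.
Qed.

Lemma polymul_gen_fixed x w : polymul (pc_gen w) x = pc_gen w ->
  exists2 u, x = pc_idem u & prefix u w.
Proof.
case: x => [[u v]|] //=; case: ifP => [wu [/size_drop_nil + ->]|_].
  by move=> /(prefix_size_le_eq wu) ->; exists u => //; apply: prefix_refl.
case: ifP => [/prefixP [r ->] [] |//].
rewrite drop_size_cat // => vru; exists u; last exact: prefix_prefix.
have /addIn size_vu : size v + size r = size u + size r by rewrite -!size_cat vru.
by move/eqP: vru; rewrite eqseq_cat // => /andP [/eqP ->].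
Qed.

Lemma polymul_idem1_neq_r x k :
  polymul x (pc_idem [:: k]) <> x -> polymul x (pc_idem [:: k]) <> None ->
  exists u, x = pc_genV u.
Proof.
case: x => [[u [|k' v]]|] /=; [by exists u | | by []].
by case: eqVneq => [->|//]; case: v => [|? ?] /=; rewrite ?cats0 ?drop0 => /(_ erefl).
Qed.

Lemma polymul_idem1_neq_l x k :
  polymul (pc_idem [:: k]) x <> x -> polymul (pc_idem [:: k]) x <> None ->
  exists v, x = pc_gen v.
Proof.
case: x => [[[|k' u] v]|] /=; [by exists v | | by []].
by case: eqVneq => [<-|//] /=; rewrite prefix0s drop0 => /(_ erefl).
Qed.

End polycyclic_monoid.

Section ij_words.
Variables (I : eqType) (i j : I).
Hypothesis neq_ij : i != j.

Definition ij_word n : seq I := rcons (nseq n i) j.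

Lemma size_ij_word n : size (ij_word n) = n.+1.
Proof. by rewrite size_rcons size_nseq. Qed.

Lemma ij_word_inj : injective ij_word.
Proof. by move=> n m /(congr1 size); rewrite !size_ij_word => -[]. Qed.

Lemma nth_ij_word n k : nth i (ij_word n) k = if k == n then j else i.
Proof.
rewrite nth_rcons size_nseq nth_nseq.
by case: ltngtP => // [/ltn_eqF|/gtn_eqF] ->.
Qed.

Lemma prefix_ij_word n m : prefix (ij_word n) (ij_word m) = (n == m).
Proof.
apply/idP/eqP => [/prefixP [r e]|->]; last exact: prefix_refl.
apply/eqP; move/(congr1 (nth i ^~ n)): e.
rewrite nth_cat size_ij_word ltnSn !nth_ij_word eqxx.
by case: eqP => // _ /eqP; rewrite (negbTE neq_ij).
Qed.

Lemma polymul_idem_ij_word n m : n != m ->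
  polymul (pc_idem (ij_word n)) (pc_idem (ij_word m)) = None.
Proof. by move=> neq_nm; rewrite polymul_incomparable // !prefix_ij_word // eq_sym. Qed.

End ij_words.

Local Open Scope classical_set_scope.

Lemma increasing_seq_cvg (f : nat -> nat) : increasing_seq f -> f @ \oo --> \oo.
Proof.
move/increasing_seqP => f_incr P [N _ NP]; exists N => // n /= Nn; apply: NP.
suff : (n <= f n)%N by apply: leq_trans.
by elim: n {Nn} => // n ih; apply: leq_ltn_trans ih (f_incr n).
Qed.

Lemma frequently_subseq (P : nat -> Prop) : (forall n, exists m, (n < m)%N /\ P m) ->
  exists2 f : nat -> nat, increasing_seq f & forall k, P (f k).
Proof.
move=> P_freq; have [f [_ f_next]] := dependent_choice (fun n => cid (P_freq n)) 0.
exists (f \o succn); last by move=> k; have [] := f_next k.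
by apply/increasing_seqP => k; have [] := f_next k.+1.
Qed.

Section topology.
Variable S : topologicalType.

Lemma closed_equalizer (T : topologicalType) (f g : T -> S) :
  hausdorff_space S -> continuous f -> continuous g -> closed [set t | f t = g t].
Proof.
move=> S_haus cf cg t Et; apply: S_haus => A B /cf fA /cg gB.
have [s [fgs [fsA gsB]]] := Et _ (@filterI _ (nbhs t) _ _ _ fA gB).
by exists (f s); split => //; rewrite fgs.
Qed.

Lemma cluster_closed (F : set_system S) (C : set S) (q : S) :
  cluster F q -> closed C -> F C -> C q.
Proof. by rewrite clusterE => qF /closure_id Cc FC; rewrite Cc; apply: qF. Qed.

Lemma dense_subset_closed (D C : set S) : dense D -> closed C -> D `<=` C ->
  forall t, C t.
Proof.
move=> Dd Cc DC t; apply: contrapT => nCt.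
have [s [nCs Ds]] := Dd _ (ex_intro _ t nCt) (closed_openC Cc).
exact: nCs (DC _ Ds).
Qed.

Lemma dense_open_set1 (D O : set S) (x : S) : accessible_space S -> dense D ->
  open O -> O x -> O `&` D `<=` [set x] -> open [set x].
Proof.
move=> S_T1 Dd Oo Ox ODx; suff <- : O = [set x] by [].
apply/seteqP; split => [t Ot|_ -> //]; apply: contrapT => neq_tx.
have [s [[Os neq_sx] Ds]] := Dd (O `&` ~` [set x]) (ex_intro _ t (conj Ot neq_tx))
  (openI Oo (closed_openC (@accessible_closed_set1 _ S_T1 x))).
exact: neq_sx (ODx _ (conj Os Ds)).
Qed.

Lemma hausdorff_cluster_eq (F : set_system S) (q z : S) : hausdorff_space S ->
  cluster F q -> (forall V, nbhs z V -> exists2 N, nbhs q N & F [set t | N t -> V t]) ->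
  q = z.
Proof.
move=> S_haus qF Fz; apply: S_haus => U V qU /Fz [N qN FNV].
have [t [NVt [Nt Ut]]] := qF _ _ FNV (filterI qN qU).
by exists t; split => //; apply: NVt.
Qed.

Lemma d_feebly_compact_cluster (u : nat -> S) : accessible_space S ->
  d_feebly_compact S -> injective u -> (forall n, open [set u n]) ->
  exists q, cluster (u @ \oo) q.
Proof.
move=> S_T1 S_dfc u_inj u_open; apply: contrapT => /forallNP no_cluster.
(* Otherwise the singletons {u n} form an infinite discrete family of open sets. *)
have : infinite_set (range (fun n => [set u n])).
  rewrite (eq_finite_set (inj_card_eq _)); first exact: infinite_nat.
  by move=> a b _ _ /= ab; apply: u_inj; have : [set u b] (u a) by rewrite -ab.
apply; apply: S_dfc => [_ [n _ <-] //|x].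
have /existsNP [A /existsNP [N /not_implyP [[n0 _ uA] /not_implyP [xN AN0]]]] :=
  no_cluster x.
pose D := u @` `I_n0 `\` [set x].
have D_closed : closed D.
  apply: (accessible_finite_set_closed.1 S_T1).
  apply: (@sub_finite_set _ _ (u @` `I_n0)); first by move=> ? [].
  exact/finite_image/finite_II.
have ND_x n : (N `\` D) (u n) -> u n = x.
  move=> [Nun nDun]; apply: contrapT => neq_x; apply: nDun; split => //.
  exists n => //; rewrite /= ltnNge; apply/negP => /uA Aun.
  by apply: AN0; exists (u n).
exists (N `\` D).
  rewrite setDE; apply: filterI xN _; apply: open_nbhs_nbhs.
  by split; [exact: closed_openC | move=> [_]; apply].
move=> _ _ [n _ <-] [m _ <-] [t [NDt /= tn]] [t' [NDt' /= tm]]; subst t t'.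
by rewrite (ND_x _ NDt) (ND_x _ NDt').
Qed.

Lemma cvg_of_cluster (u : nat -> S) (z : S) : accessible_space S ->
  d_feebly_compact S -> injective u -> (forall n, open [set u n]) ->
  (forall G : set_system nat, Filter G -> G --> \oo ->
     forall q, cluster (u @ G) q -> q = z) ->
  u @ \oo --> z.
Proof.
move=> S_T1 S_dfc u_inj u_open cluster_z W zW; apply: contrapT => not_ev.
have [f f_incr f_notW] :
    exists2 f : nat -> nat, increasing_seq f & forall k, ~ W (u (f k)).
  apply: (@frequently_subseq (fun m => ~ W (u m))) => n.
  apply: contrapT => /forallNP never.
  apply: not_ev; exists n.+1 => // m /= nm.
  by have /not_andP [/negP|/contrapT] := never m; rewrite ?nm.
have [|q uf_q] := @d_feebly_compact_cluster (u \o f) S_T1 S_dfc _ (fun k => u_open (f k)).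
  by move=> a b /u_inj; apply: increasing_seq_injective.
have qz := cluster_z _ _ (increasing_seq_cvg f_incr) q uf_q.
have [t [notWt Wt]] : ~` W `&` W !=set0.
  by apply: uf_q; [exists 0 => // k _; exact: f_notW | rewrite qz].
exact: notWt.
Qed.

End topology.

Section topological_magma.
Variables (S : topologicalType) (mul : S -> S -> S).
Hypothesis mul_cont : continuous (fun p : S * S => mul p.1 p.2).
Hypothesis S_haus : hausdorff_space S.

Lemma continuous_mull a : continuous (mul a).
Proof.
move=> t; apply: (@continuous_comp _ _ _ (pair a) (fun p => mul p.1 p.2)).
  exact: (cvg_pair (cvg_cst a) cvg_id).
exact: mul_cont.
Qed.

Lemma continuous_mulr a : continuous (mul^~ a).
Proof.
move=> t; apply: (@continuous_comp _ _ _ (pair^~ a) (fun p => mul p.1 p.2)).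
  exact: (cvg_pair cvg_id (cvg_cst a)).
exact: mul_cont.
Qed.

Lemma mul_nbhs s r W : nbhs (mul s r) W ->
  exists N M, [/\ nbhs s N, nbhs r M & forall a b, N a -> M b -> W (mul a b)].
Proof.
move=> /(@mul_cont (s, r)) [[N M] /= [sN rM] NMW].
by exists N, M; split => // a b Na Mb; apply: (NMW (a, b)).
Qed.

Context {T : Type} (G : set_system T) {FG : Filter G}.

Lemma cluster_fixed_r_eq (a b : T -> S) (z q : S) : mul q z = z ->
  b @ G --> z -> (forall n, mul (a n) (b n) = a n) -> cluster (a @ G) q -> q = z.
Proof.
move=> qz bz ab aq; apply: hausdorff_cluster_eq aq _ => // V zV.
rewrite -qz in zV; have [N [M [qN zM NMV]]] := mul_nbhs zV.
exists N => //; apply: (@filterS _ G _ (b @^-1` M)) (bz _ zM) => n Mbn Nan.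
by rewrite -ab; apply: NMV.
Qed.

Lemma cluster_fixed_l_eq (a b : T -> S) (z q : S) : mul z q = z ->
  b @ G --> z -> (forall n, mul (b n) (a n) = a n) -> cluster (a @ G) q -> q = z.
Proof.
move=> zq bz ba aq; apply: hausdorff_cluster_eq aq _ => // V zV.
rewrite -zq in zV; have [M [N [zM qN MNV]]] := mul_nbhs zV.
exists N => //; apply: (@filterS _ G _ (b @^-1` M)) (bz _ zM) => n Mbn Nan.
by rewrite -ba; apply: MNV.
Qed.

Lemma cluster_orthogonal_idempotents_eq (a : T -> S) (z q : S) :
  (forall n, mul (a n) (a n) = a n) ->
  (forall m, \forall n \near G, mul (a n) (a m) = z) ->
  cluster (a @ G) q -> q = z.
Proof.
move=> a_idem a_orth aq.
have qa m : mul q (a m) = z.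
  apply: (cluster_closed (C := [set t | mul t (a m) = z]) aq _ (a_orth m)).
  exact: closed_equalizer S_haus (@continuous_mulr (a m)) (fun=> cvg_cst _).
have qq : mul q q = z.
  apply: (cluster_closed (C := [set t | mul q t = z]) aq _
    (@filterE _ G _ _ (fun n => qa n))).
  exact: closed_equalizer S_haus (@continuous_mull q) (fun=> cvg_cst _).
apply: hausdorff_cluster_eq aq _ => // V zV.
rewrite -qq in zV; have [N [M [qN qM NMV]]] := mul_nbhs zV.
exists (N `&` M); first exact: filterI.
by apply: (@filterE _ G) => n /= [Nan Man]; rewrite -a_idem; apply: NMV.
Qed.

End topological_magma.

Section dense_polycyclic.
Variables (I : eqType) (S : topologicalType) (mul : S -> S -> S).
Hypothesis mul_cont : continuous (fun p : S * S => mul p.1 p.2).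
Hypothesis S_haus : hausdorff_space S.
Variable h : polycyclic I -> S.
Hypothesis h_inj : injective h.
Hypothesis h_mul : forall x y, h (polymul x y) = mul (h x) (h y).
Hypothesis h_dense : dense (range h).
Hypothesis S_dfc : d_feebly_compact S.

Let open_neq (f g : S -> S) :
  continuous f -> continuous g -> open [set t | f t <> g t].
Proof. by move=> cf cg; apply: closed_openC; apply: closed_equalizer. Qed.

Lemma mul0s t : mul (h None) t = h None.
Proof.
have C_closed : closed [set s | mul (h None) s = h None].
  exact: closed_equalizer S_haus (@continuous_mull _ _ mul_cont _)
    (fun=> cvg_cst _).
by apply: (dense_subset_closed h_dense C_closed) => _ [x _ <-] /=; rewrite -h_mul.
Qed.

Lemma muls0 t : mul t (h None) = h None.
Proof.
have C_closed : closed [set s | mul s (h None) = h None].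
  exact: closed_equalizer S_haus (@continuous_mulr _ _ mul_cont _)
    (fun=> cvg_cst _).
apply: (dense_subset_closed h_dense C_closed) => _ [x _ <-] /=.
by rewrite -h_mul polymulx0.
Qed.

Lemma open_set1_of_trace (O : set S) x : open O -> O (h x) ->
  (forall y, O (h y) -> y = x) -> open [set h x].
Proof.
move=> Oo Ox O_x; apply: dense_open_set1 (hausdorff_accessible S_haus) h_dense Oo Ox _.
by move=> t [Ot [y _ yt]]; rewrite -yt (O_x y) // yt.
Qed.

Lemma open_set1_one (k : I) : open [set h (pc_one I)].
Proof.
pose c := h (pc_idem [:: k]).
apply: (@open_set1_of_trace ([set t | mul t c <> t] `&` [set t | mul t c <> h None]
    `&` ([set t | mul c t <> t] `&` [set t | mul c t <> h None]))).
- have cr := @continuous_mulr _ _ mul_cont c.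
  have cl := @continuous_mull _ _ mul_cont c.
  have c0 : continuous (fun _ : S => h None) by move=> t; exact: cvg_cst.
  have c1 : continuous (@id S) := fun=> cvg_id.
  by apply: openI; apply: openI; [apply: (open_neq cr) | apply: (open_neq cr) |
    apply: (open_neq cl) | apply: (open_neq cl)].
- by rewrite /c /= -!h_mul polymul1x polymulx1; split; split => /h_inj.
move=> y [[/= yc_y yc_0] [/= cy_y cy_0]].
have [u yu] : exists u, y = pc_genV u.
  by apply: (@polymul_idem1_neq_r _ _ k) => e; [apply: yc_y | apply: yc_0];
    rewrite /c -h_mul e.
have [v] : exists v, y = pc_gen v.
  by apply: (@polymul_idem1_neq_l _ _ k) => e; [apply: cy_y | apply: cy_0];
    rewrite /c -h_mul e.
by rewrite yu => -[-> _].
Qed.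

Section two_letters.
Variables (i j : I).
Hypothesis neq_ij : i != j.

Lemma open_set1_genV w : open [set h (pc_genV w)].
Proof.
apply: (@open_set1_of_trace (mul (h (pc_gen w)) @^-1` [set h (pc_one I)])).
- by apply: open_comp (open_set1_one i) => t _; apply: continuous_mull.
- by rewrite /= -h_mul polymul_gen_genV.
- by move=> y /=; rewrite -h_mul => /h_inj /polymul_gen_eq1.
Qed.

Lemma open_set1_gen w : open [set h (pc_gen w)].
Proof.
apply: (@open_set1_of_trace (mul^~ (h (pc_genV w)) @^-1` [set h (pc_one I)])).
- by apply: open_comp (open_set1_one i) => t _; apply: continuous_mulr.
- by rewrite /= -h_mul polymul_gen_genV.
- by move=> y /=; rewrite -h_mul => /h_inj /polymul_genV_eq1.
Qed.

Lemma open_set1_idem_rcons u : open [set h (pc_idem (rcons u j))].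
Proof.
(* In P_I, p_w t = p_w forces t = e_v for a prefix v of w; for a proper
   prefix, e_v e_(u i) = e_(u i), while e_w e_(u i) = 0. *)
pose w := rcons u j; pose e := h (pc_idem (rcons u i)).
have ew : polymul (pc_idem w) (pc_idem (rcons u i)) = None.
  apply: polymul_idem_same_size; first by rewrite !size_rcons.
  by rewrite (inj_eq (@rcons_injr _ u)) eq_sym.
apply: (@open_set1_of_trace (mul (h (pc_gen w)) @^-1` [set h (pc_gen w)]
    `&` [set t | mul t e <> e])).
- apply: openI.
    by apply: open_comp (open_set1_gen w) => t _; apply: continuous_mull.
  by apply: open_neq; [apply: continuous_mulr | move=> t; apply: cvg_cst].
- split; first by rewrite /= -h_mul polymul_gen_idem.
  by rewrite /= /e -h_mul ew => /h_inj.
move=> y [/=]; rewrite -h_mul => /h_inj /polymul_gen_fixed [v -> vw].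
case: (eqVneq v w) => [-> //|neq_vw]; rewrite /e -h_mul polymul_idem_prefix //.
exact: prefix_rcons_proper vw neq_vw.
Qed.

Lemma cvg_idem_ij_word : (fun n => h (pc_idem (ij_word i j n))) @ \oo --> h None.
Proof.
apply: (cvg_of_cluster (hausdorff_accessible S_haus) S_dfc _
  (fun n => open_set1_idem_rcons (nseq n i))).
  by move=> n m /h_inj [] /ij_word_inj.
move=> G FG Goo q; apply: cluster_orthogonal_idempotents_eq => //.
  by move=> n; rewrite -h_mul polymul_idem_prefix ?prefix_refl.
move=> m; apply: filterS (Goo _ (nbhs_infty_gt m)) => n /= mn.
by rewrite -h_mul polymul_idem_ij_word // gtn_eqF.
Qed.

Lemma cvg_gen_ij_word : (fun n => h (pc_gen (ij_word i j n))) @ \oo --> h None.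
Proof.
apply: (cvg_of_cluster (hausdorff_accessible S_haus) S_dfc _
  (fun n => open_set1_gen _)).
  by move=> n m /h_inj [] /ij_word_inj.
move=> G FG Goo q.
apply: (@cluster_fixed_r_eq _ _ mul_cont S_haus _ _ _ _
  (fun n => h (pc_idem (ij_word i j n)))).
- exact: muls0.
- exact: cvg_trans (cvg_app _ Goo) cvg_idem_ij_word.
- by move=> n; rewrite -h_mul polymul_gen_idem.
Qed.

Lemma cvg_genV_ij_word : (fun n => h (pc_genV (ij_word i j n))) @ \oo --> h None.
Proof.
apply: (cvg_of_cluster (hausdorff_accessible S_haus) S_dfc _
  (fun n => open_set1_genV _)).
  by move=> n m /h_inj [] /ij_word_inj.
move=> G FG Goo q.
apply: (@cluster_fixed_l_eq _ _ mul_cont S_haus _ _ _ _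
  (fun n => h (pc_idem (ij_word i j n)))).
- exact: mul0s.
- exact: cvg_trans (cvg_app _ Goo) cvg_idem_ij_word.
- by move=> n; rewrite -h_mul polymul_idem_genV.
Qed.

Lemma h_one_eq_zero : h (pc_one I) = h None.
Proof.
have gen_genV n : mul (h (pc_gen (ij_word i j n))) (h (pc_genV (ij_word i j n))) =
    h (pc_one I) by rewrite -h_mul polymul_gen_genV.
have cvg_one : (fun=> h (pc_one I)) @ \oo --> h None.
  rewrite -(funext gen_genV) -[X in _ --> X](mul0s (h None)).
  exact: continuous2_cvg _ (@mul_cont _) cvg_gen_ij_word cvg_genV_ij_word.
apply: (cvg_unique S_haus (F := (fun=> h (pc_one I)) @ \oo)) cvg_one.
exact: cvg_cst.
Qed.

End two_letters.

End dense_polycyclic.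

Theorem corollary13 (I : eqType) (i j : I) (hij : i != j)
  (S : topologicalType) (mul : S -> S -> S)
  (mul_assoc : associative mul)
  (mul_cont : continuous (fun p : S * S => mul p.1 p.2))
  (S_haus : hausdorff_space S)
  (S_dfc : d_feebly_compact S) :
  ~ contains_dense_polycyclic I mul.
Proof.
move=> [h [h_inj h_mul h_dense]].
by have /h_inj := h_one_eq_zero mul_cont S_haus h_inj h_mul h_dense S_dfc hij.
Qed.
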